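(* Let $(X, M, \ast)$ be a stationary fuzzy metric space (in the sense of George and Veeramani), and write $M(x,y)$ for the constant value of $M(x,y,t)$, $t>0$. Define $\hat{M}: X^2\times X^2\times(0,+\infty)\to[0,1]$ by $\hat{M}((x_1,x_2),(y_1,y_2),t)=\min\{M(x_1,y_1),M(x_2,y_2)\}$, so that $(X^2,\hat{M},\ast)$ is a fuzzy metric space. Then the function $X^2\to(0,1]$, $(x,y)\mapsto M(x,y)$, is $\mathbb{R}$-uniformly continuous with respect to $(X^2,\hat M,\ast)$; that is, for every $\varepsilon>0$ there exist $s>0$ and $\delta\in(0,1)$ such that for all $(x,z),(x',z')\in X^2$, $\hat{M}((x,z),(x',z'),s)>1-\delta$ implies $|M(x,z)-M(x',z')|<\varepsilon$.
   Context: A continuous $t$-norm $\ast$ is a continuous binary operation on $[0,1]$ that is associative, commutative, nondecreasing in each argument, and has $1$ as neutral element. A fuzzy metric space (George–Veeramani) is a triple $(X,M,\ast)$ where $X$ is a nonempty set, $\ast$ is a continuous $t$-norm, and $M: X\times X\times(0,+\infty)\to[0,1]$ satisfies, for all $x,y,z\in X$ and $s,t>0$: (GV1) $M(x,y,t)>0$; (GV2) $M(x,y,t)=1$ iff $x=y$; (GV3) $M(x,y,t)=M(y,x,t)$; (GV4) $M(x,y,t)\ast M(y,z,s)\le M(x,z,t+s)$; (GV5) $t\mapsto M(x,y,t)$ is continuous on $(0,+\infty)$. The fuzzy metric $M$ is stationary if for all $x,y\in X$ the function $t\mapsto M(x,y,t)$ is constant. A map $f:Y\to\mathbb{R}$ on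 a fuzzy metric space $(Y,N,\ast)$ is $\mathbb{R}$-uniformly continuous if for every $\varepsilon>0$ there exist $s>0$ and $\delta\in(0,1)$ such that $N(u,v,s)>1-\delta$ implies $|f(u)-f(v)|<\varepsilon$. *)

From Stdlib Require Import Reals.
Open Scope R_scope.

Definition is_cont_tnorm (T : R -> R -> R) : Prop :=
  (forall a b, 0 <= a <= 1 -> 0 <= b <= 1 -> 0 <= T a b <= 1) /\
  (forall a b c, 0 <= a <= 1 -> 0 <= b <= 1 -> 0 <= c <= 1 ->
       T a (T b c) = T (T a b) c) /\
  (forall a b, 0 <= a <= 1 -> 0 <= b <= 1 -> T a b = T b a) /\
  (forall a b c d, 0 <= a <= 1 -> 0 <= b <= 1 -> 0 <= c <= 1 -> 0 <= d <= 1 ->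
       a <= c -> b <= d -> T a b <= T c d) /\
  (forall a, 0 <= a <= 1 -> T a 1 = a) /\
  (forall a b, 0 <= a <= 1 -> 0 <= b <= 1 ->
     forall eps, eps > 0 -> exists d, d > 0 /\
       forall a' b', 0 <= a' <= 1 -> 0 <= b' <= 1 ->
         Rabs (a' - a) < d -> Rabs (b' - b) < d ->
         Rabs (T a' b' - T a b) < eps).

Definition is_GV_fuzzy_metric {X : Type} (M : X -> X -> R -> R) (T : R -> R -> R) : Prop :=
  (forall x y t, 0 < t -> 0 <= M x y t <= 1) /\
  (forall x y t, 0 < t -> M x y t > 0) /\
  (forall x y t, 0 < t -> (M x y t = 1 <-> x = y)) /\
  (forall x y t, 0 < t -> M x y t = M y x t) /\
  (forall x y z t s, 0 < t -> 0 < s -> T (M x y t) (M y z s) <= M x z (t + s)) /\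
  (forall x y t, 0 < t ->
     forall eps, eps > 0 -> exists d, d > 0 /\
       forall t', 0 < t' -> Rabs (t' - t) < d -> Rabs (M x y t' - M x y t) < eps).

Definition fuzzy_metric_space {X : Type} (M : X -> X -> R -> R) (T : R -> R -> R) : Prop :=
  is_cont_tnorm T /\ is_GV_fuzzy_metric M T.

Definition stationary {X : Type} (M : X -> X -> R -> R) : Prop :=
  forall x y t s, 0 < t -> 0 < s -> M x y t = M x y s.

Definition Mhat {X : Type} (M : X -> X -> R -> R) (p q : X * X) (t : R) : R :=
  Rmin (M (fst p) (fst q) t) (M (snd p) (snd q) t).

Definition R_uniformly_continuous {Y : Type} (N : Y -> Y -> R -> R) (f : Y -> R) : Prop :=
  forall eps, eps > 0 -> exists s delta, s > 0 /\ 0 < delta < 1 /\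
    forall u v, N u v s > 1 - delta -> Rabs (f u - f v) < eps.

(** A stationary fuzzy metric satisfies the triangle inequality
    [T (M a a') (M a' b') <= M a b'] at a single time.  So if [M a a'] and
    [M b b'] are close to 1, then [M a b] is bounded below by [M a' b'] up to
    the defect of [T] near 1; by symmetry this gives [|M a b - M a' b'|]
    small.  The defect [a - T b a] for [b] near 1 is small uniformly in
    [a] in [0,1] because [T] is continuous and monotone on the compact square:
    continuity gives the estimate at finitely many grid points [a = n h], and
    monotonicity spreads it over the cells between them. *)

From Stdlib Require Import Reals Lra.
Open Scope R_scope.

Section TNorm.

Variable T : R -> R -> R.
Hypothesis HT : is_cont_tnorm T.

Lemma tnorm_range a b : 0 <= a <= 1 -> 0 <= b <= 1 -> 0 <= T a b <= 1.
Proof. destruct HT as [Hr _]; apply Hr. Qed.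

Lemma tnorm_le_r a b c : 0 <= a <= 1 -> 0 <= b <= 1 -> 0 <= c <= 1 ->
  b <= c -> T a b <= T a c.
Proof. destruct HT as [_ [_ [_ [Hm _]]]]; intros; apply Hm; lra. Qed.

Lemma tnorm_1l a : 0 <= a <= 1 -> T 1 a = a.
Proof.
  destruct HT as [_ [_ [Hc [_ [H1 _]]]]]; intros Ha.
  rewrite Hc by lra; apply H1; exact Ha.
Qed.

Lemma tnorm_near1_at c eps : 0 <= c <= 1 -> 0 < eps ->
  exists d, 0 < d /\ forall b, 0 <= b <= 1 -> b > 1 - d -> T b c > c - eps.
Proof.
  destruct HT as [_ [_ [_ [_ [_ Hcont]]]]]; intros Hc Heps.
  destruct (Hcont 1 c ltac:(lra) Hc eps Heps) as [d [Hd Hnear]].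
  exists d; split; [exact Hd|]; intros b Hb Hbd.
  assert (Hdist : Rabs (T b c - T 1 c) < eps).
  { apply Hnear; [exact Hb | exact Hc | |].
    - rewrite Rabs_left1; lra.
    - rewrite Rminus_diag, Rabs_R0; exact Hd. }
  rewrite tnorm_1l in Hdist by exact Hc.
  apply Rabs_def2 in Hdist; lra.
Qed.

Lemma tnorm_near1_below_grid h eps : 0 < h -> 0 < eps -> forall n : nat,
  exists d, 0 < d /\ forall a b, 0 <= a <= 1 -> 0 <= b <= 1 ->
    a <= INR n * h -> b > 1 - d -> T b a > a - h - eps.
Proof.
  intros Hh Heps; induction n as [|n [d1 [Hd1 IH]]].
  - exists 1; split; [lra|]; intros a b Ha Hb Hah _.
    rewrite Rmult_0_l in Hah.
    destruct (tnorm_range b a Hb Ha); lra.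
  - assert (Hc0 : 0 <= INR n * h) by (apply Rmult_le_pos; [apply pos_INR | lra]).
    rewrite S_INR.
    destruct (Rle_dec (INR n * h) 1) as [Hc1 | Hc1].
    + destruct (tnorm_near1_at (INR n * h) eps ltac:(lra) Heps) as [d2 [Hd2 Hat]].
      exists (Rmin d1 d2); split; [now apply Rmin_pos|].
      intros a b Ha Hb Hah Hbd.
      pose proof (Rmin_l d1 d2); pose proof (Rmin_r d1 d2).
      destruct (Rle_dec a (INR n * h)) as [Hle | Hgt].
      * apply IH; auto; lra.
      * pose proof (tnorm_le_r b (INR n * h) a Hb ltac:(lra) Ha ltac:(lra)).
        pose proof (Hat b Hb ltac:(lra)); lra.
    + exists d1; split; [exact Hd1|]; intros a b Ha Hb _ Hbd.
      apply IH; auto; lra.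
Qed.

Lemma tnorm_near1_unif eps : 0 < eps ->
  exists d, 0 < d < 1 /\ forall a b, 0 <= a <= 1 -> 0 <= b <= 1 ->
    b > 1 - d -> T b a > a - eps.
Proof.
  intros Heps.
  destruct (INR_unbounded (2 / eps)) as [N HN].
  destruct (tnorm_near1_below_grid (eps / 2) (eps / 2) ltac:(lra) ltac:(lra) N)
    as [d [Hd Hgrid]].
  assert (HNh : 1 <= INR N * (eps / 2)).
  { apply Rmult_gt_compat_r with (r := eps / 2) in HN; [|lra].
    unfold Rdiv in HN |- *; field_simplify in HN; lra. }
  exists (Rmin d (1 / 2)); split.
  - split; [apply Rmin_pos; lra | pose proof (Rmin_r d (1 / 2)); lra].
  - intros a b Ha Hb Hbd; pose proof (Rmin_l d (1 / 2)).
    pose proof (Hgrid a b Ha Hb ltac:(lra) ltac:(lra)); lra.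
Qed.

End TNorm.

Section StationaryFuzzyMetric.

Variables (X : Type) (M : X -> X -> R -> R) (T : R -> R -> R).
Hypothesis HM : is_GV_fuzzy_metric M T.
Hypothesis Hstat : stationary M.

Lemma stationary_triangle x y z t : 0 < t -> T (M x y t) (M y z t) <= M x z t.
Proof.
  destruct HM as [_ [_ [_ [_ [Htri _]]]]]; intros Ht.
  rewrite (Hstat x y t (t / 2)), (Hstat y z t (t / 2)),
    (Hstat x z t (t / 2 + t / 2)) by lra.
  apply Htri; lra.
Qed.

(* Triangle inequality through [a'] bounds [M a b'], then through [b'] bounds [M a b]. *)
Lemma stationary_near_pairs_ge eps d t : 0 < t ->
  (forall a b, 0 <= a <= 1 -> 0 <= b <= 1 -> b > 1 - d -> T b a > a - eps) ->
  forall a a' b b', M a a' t > 1 - d -> M b b' t > 1 - d ->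
    M a b t > M a' b' t - 2 * eps.
Proof.
  destruct HM as [Hr [_ [_ [Hsym _]]]]; intros Ht Hnear a a' b b' Ha Hb.
  assert (Hr' : forall x y, 0 <= M x y t <= 1) by (intros; apply Hr; exact Ht).
  pose proof (stationary_triangle a a' b' t Ht) as Htri_a.
  pose proof (stationary_triangle b b' a t Ht) as Htri_b.
  rewrite (Hsym b' a), (Hsym b a) in Htri_b by exact Ht.
  pose proof (Hnear (M a' b' t) (M a a' t) (Hr' _ _) (Hr' _ _) Ha).
  pose proof (Hnear (M a b' t) (M b b' t) (Hr' _ _) (Hr' _ _) Hb).
  lra.
Qed.

Lemma stationary_near_pairs_dist eps d t : 0 < t ->
  (forall a b, 0 <= a <= 1 -> 0 <= b <= 1 -> b > 1 - d -> T b a > a - eps) ->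
  forall a a' b b', M a a' t > 1 - d -> M b b' t > 1 - d ->
    Rabs (M a b t - M a' b' t) < 2 * eps.
Proof.
  destruct HM as [_ [_ [_ [Hsym _]]]]; intros Ht Hnear a a' b b' Ha Hb.
  pose proof (stationary_near_pairs_ge eps d t Ht Hnear a a' b b' Ha Hb).
  rewrite (Hsym a a') in Ha by exact Ht; rewrite (Hsym b b') in Hb by exact Ht.
  pose proof (stationary_near_pairs_ge eps d t Ht Hnear a' a b' b Ha Hb).
  apply Rabs_def1; lra.
Qed.

End StationaryFuzzyMetric.

Theorem mainTheorem2 (X : Type) (M : X -> X -> R -> R) (T : R -> R -> R) :
  fuzzy_metric_space M T -> stationary M ->
  R_uniformly_continuous (Mhat M) (fun p : X * X => M (fst p) (snd p) 1).
Proof.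
  intros [HT HM] Hstat eps Heps.
  destruct (tnorm_near1_unif T HT (eps / 2) ltac:(lra)) as [d [Hd Hnear]].
  exists 1, d; split; [lra|]; split; [exact Hd|].
  intros [x z] [x' z']; unfold Mhat; simpl; intros Hmin.
  assert (Hx : M x x' 1 > 1 - d) by (pose proof (Rmin_l (M x x' 1) (M z z' 1)); lra).
  assert (Hz : M z z' 1 > 1 - d) by (pose proof (Rmin_r (M x x' 1) (M z z' 1)); lra).
  replace eps with (2 * (eps / 2)) by field.
  exact (stationary_near_pairs_dist X M T HM Hstat _ _ 1 Rlt_0_1 Hnear x x' z z' Hx Hz).
Qed.
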